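(* Let $\ell$ be a prime and let $R,S,T$ be pairwise coprime positive integers. Let $S'=\prod_{q:\ \operatorname{ord}_q(S)\text{ odd}} q$, let $v$ be the positive integer with $SS'=v^2$, let $u=RS'$, and write $TS'=mn^2$ with $m$ a squarefree positive integer and $n$ a positive integer. Let $K=\mathbb{Q}(\sqrt{-m})$ with ring of integers $\mathcal{O}$, and let $\epsilon\in K^*$ be a representative of an element of $\mathcal{E}$. Let $q=2k\ell+1$ be a prime ($k$ a positive integer) such that $q\mathcal{O}=\mathfrak{q}_1\mathfrak{q}_2$ with $\mathfrak{q}_1\neq\mathfrak{q}_2$ and $\operatorname{ord}_{\mathfrak{q}_j}(\epsilon)=0$ for $j=1,2$. Let $\chi(\ell,q)=\{\eta^\ell:\eta\in\mathbb{F}_q\}$ and let $C(\ell,q)$ be the set of $\zeta\in\chi(\ell,q)$ such that, for each $j=1,2$, $\big((v\zeta+n\sqrt{-m})/\epsilon\big)^{2k}\equiv 0$ or $1\pmod{\mathfrak{q}_j}$ (where $\zeta$ is regarded as an element of $\mathcal{O}/\mathfrak{q}_j\cong\mathbb{F}_q$). If $C(\ell,q)=\emptyset$, then there are no $\sigma\in\mathbb{Z}$ and $\eta\in K$ satisfying \[ v\sigma^\ell+n\sqrt{-m}=\epsilon\eta^\ell . \]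
   Context: Let $\mathfrak{S}$ be the set of prime ideals of $\mathcal{O}$ dividing $u$ or $2n\sqrt{-m}$. The $\ell$-Selmer group is $K(\mathfrak{S},\ell)=\{\epsilon\in K^*/K^{*\ell}:\operatorname{ord}_{\mathfrak P}(\epsilon)\equiv 0\pmod\ell \text{ for all prime ideals }\mathfrak P\notin\mathfrak{S}\}$, and $\mathcal{E}=\{\epsilon\in K(\mathfrak{S},\ell): \operatorname{Norm}(\epsilon)/u\in\mathbb{Q}^{*\ell}\}$. *)

(* K = Q(sqrt(-m)) is modelled inside the algebraic complex numbers algC. *)
From HB Require Import structures.
From mathcomp Require Import all_boot all_order all_algebra all_field.
Set Implicit Arguments. Unset Strict Implicit. Unset Printing Implicit Defensive.
Import Order.TTheory GRing.Theory Num.Theory.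
Local Open Scope ring_scope.

Definition sqm (m : nat) : algC := sqrtC (- (m%:R)).

Definition inK (m : nat) (x : algC) : Prop :=
  exists a b : rat, x = ratr a + ratr b * sqm m.

Definition inO (m : nat) (x : algC) : Prop := inK m x /\ x \in Aint.

Definition prime_ideal (m : nat) (P : algC -> Prop) : Prop :=
  [/\ (forall x, P x -> inO m x),
      P 0,
      (forall x y, P x -> P y -> P (x + y)),
      (forall a x, inO m a -> P x -> P (a * x))
    & [/\ ~ P 1,
      (forall x y, inO m x -> inO m y -> P (x * y) -> P x \/ P y)
    & exists x, P x /\ x <> 0]].

Definition idealMul (I J : algC -> Prop) (z : algC) : Prop :=
  exists s : seq (algC * algC),
    (forall p, p \in s -> I p.1 /\ J p.2) /\ z = \sum_(p <- s) (p.1 * p.2).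

Fixpoint idealPow (m : nat) (P : algC -> Prop) (f : nat) : algC -> Prop :=
  match f with
  | 0 => inO m
  | f'.+1 => idealMul (idealPow m P f') P
  end.

Definition principal (m : nat) (c : algC) (z : algC) : Prop :=
  exists y, inO m y /\ z = c * y.

Definition ordO (m : nat) (P : algC -> Prop) (a : algC) (f : nat) : Prop :=
  idealPow m P f a /\ ~ idealPow m P f.+1 a.

Definition ordK (m : nat) (P : algC -> Prop) (x : algC) (e : int) : Prop :=
  exists a d : algC, [/\ inO m a, inO m d, a <> 0, d <> 0 & x = a / d] /\
    exists f g : nat, [/\ ordO m P a f, ordO m P d g & e = f%:Z - g%:Z].

(* congruence mod P of P-integral elements: x - y lies in the maximal
   ideal of the localization O_P *)
Definition congP (m : nat) (P : algC -> Prop) (x y : algC) : Prop :=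
  exists a d : algC, [/\ P a, inO m d, ~ P d & x - y = a / d].

Definition squarefree (m : nat) : Prop := forall p, prime p -> ~~ (p * p %| m)%N.

Definition Sprime (S : nat) : nat := (\prod_(p <- primes S | odd (logn p S)) p)%N.

Definition inSset (m n u : nat) (P : algC -> Prop) : Prop :=
  P (u%:R) \/ P (2%:R * n%:R * sqm m).

Definition in_Selmer (l m n u : nat) (eps : algC) : Prop :=
  [/\ inK m eps, eps <> 0 &
    forall P, prime_ideal m P -> ~ inSset m n u P ->
      exists e : int, ordK m P eps e /\ (l%:Z %| e)%Z].

Definition in_E (l m n u : nat) (eps : algC) : Prop :=
  in_Selmer l m n u eps /\
  exists r : rat, r != 0 /\ (eps * eps^*) / u%:R = (ratr r) ^+ l.

(* the condition defining C(l,q) at the prime ideal P, for zeta in F_q *)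
Definition condC (m n v k : nat) (eps : algC) (P : algC -> Prop) (z : nat) : Prop :=
  let x := ((v%:R * z%:R + n%:R * sqm m) / eps) ^+ (2 * k) in
  congP m P x 0 \/ congP m P x 1.

(* Let P be q1 or q2. Since q O = q1 q2 with q1 <> q2, -m is a square modulo q
   (otherwise every element of q1 would be divisible by q, forcing 1 into q2), so
   every element of O is congruent to a rational integer modulo P and Fermat's
   little theorem holds modulo P. An element y of the other prime, not in P,
   satisfies P y \subset q O; multiplying by powers of y clears P from
   denominators, so eps, of P-order 0, is a quotient of P-units and the l-th
   root eta is P-integral. Put zeta = sigma^l in F_q and X = v zeta + n sqrt(-m),
   so that X = eps eta^l modulo q. Either P divides X, and then (X/eps)^(2k) = 0
   mod P, or eta is a P-unit and (X/eps)^(2k) = eta^(2kl) = eta^(q-1) = 1 mod P.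
   Hence zeta lies in C(l,q). *)

From HB Require Import structures.
From mathcomp Require Import all_boot all_order all_algebra all_field.
From mathcomp Require Import ring zify.
From Stdlib Require Import Classical FunctionalExtensionality PropExtensionality.
Import Order.TTheory GRing.Theory Num.Theory.
Set Implicit Arguments. Unset Strict Implicit. Unset Printing Implicit Defensive.
Local Open Scope ring_scope.

Section QuadraticField.
Variable m : nat.
Local Notation s := (sqm m).

Lemma sqm_mul_self : s * s = - m%:R.
Proof. by rewrite -expr2 /sqm sqrtCK. Qed.

Lemma inK_int (z : int) : inK m z%:~R.
Proof. by exists z%:~R, 0; rewrite rmorph0 mul0r addr0 ratr_int. Qed.

Lemma inK_sqm : inK m s.
Proof. by exists 0, 1; rewrite rmorph0 rmorph1 add0r mul1r. Qed.

Lemma inK_add x y : inK m x -> inK m y -> inK m (x + y).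
Proof.
case=> [a [b ->]] [c [d ->]]; exists (a + c), (b + d).
by rewrite !rmorphD /=; ring.
Qed.

Lemma inK_opp x : inK m x -> inK m (- x).
Proof. by case=> [a [b ->]]; exists (- a), (- b); rewrite !rmorphN /=; ring. Qed.

Lemma inK_mul x y : inK m x -> inK m y -> inK m (x * y).
Proof.
case=> [a [b ->]] [c [d ->]]; exists (a * c - m%:R * b * d), (a * d + b * c).
rewrite !(rmorphD, rmorphN, rmorphM) /= rmorph_nat.
ring: sqm_mul_self.
Qed.

Lemma Aint_sqm : s \in Aint.
Proof.
apply: (@root_monic_Aint ('X^2 + (m%:R)%:P)).
- by rewrite /root !hornerE /sqm sqrtCK addNr.
- by rewrite monicXnaddC.
- apply/polyOverP => i; rewrite coefD coefXn coefC -mulrb.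
  by apply: rpredD; [exact: rpred_nat | apply: rpredMn; exact: rpred_nat].
Qed.

Lemma inO_add x y : inO m x -> inO m y -> inO m (x + y).
Proof. by case=> [? ?] [? ?]; split; [apply: inK_add | apply: rpredD]. Qed.

Lemma inO_opp x : inO m x -> inO m (- x).
Proof. by case=> [? ?]; split; [apply: inK_opp | rewrite rpredN]. Qed.

Lemma inO_sub x y : inO m x -> inO m y -> inO m (x - y).
Proof. by move=> hx hy; apply: inO_add hx (inO_opp hy). Qed.

Lemma inO_mul x y : inO m x -> inO m y -> inO m (x * y).
Proof. by case=> [? ?] [? ?]; split; [apply: inK_mul | apply: rpredM]. Qed.

Lemma inO_int (z : int) : inO m z%:~R.
Proof. by split; [apply: inK_int | apply: Aint_int]. Qed.

Lemma inO_nat (z : nat) : inO m z%:R.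
Proof. exact: (inO_int z). Qed.

Lemma inO_sqm : inO m s.
Proof. by split; [apply: inK_sqm | apply: Aint_sqm]. Qed.

Lemma inO_lin (A B : int) : inO m (A%:~R + B%:~R * s).
Proof. by apply: inO_add; [exact: inO_int | apply: inO_mul; [exact: inO_int | exact: inO_sqm]]. Qed.

Lemma inO_exp x n : inO m x -> inO m (x ^+ n).
Proof.
move=> hx; elim: n => [|n IH]; first by rewrite expr0; exact: (inO_nat 1).
by rewrite exprS; apply: inO_mul.
Qed.

Lemma inK_int_coord x : inK m x ->
  exists (D : nat) (A B : int), (0 < D)%N /\ D%:R * x = A%:~R + B%:~R * s.
Proof.
case=> [a [b ->]].
exists (`|denq a| * `|denq b|)%N, (numq a * denq b), (numq b * denq a); split.
  by rewrite muln_gt0 !absz_gt0 !gt_eqF ?denq_gt0.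
have ratr_num c : ((numq c)%:~R : algC) = ratr c * (denq c)%:~R.
  by rewrite -[LHS]ratr_int numqE rmorphM /= ratr_int.
rewrite -[_%:R]/((_ * _)%:Z%:~R) PoszM !gez0_abs ?ltW ?denq_gt0 //.
by rewrite !intrM !ratr_num; ring.
Qed.

End QuadraticField.

Lemma conj_sqm (m : nat) : (0 < m)%N -> (sqm m)^* = - sqm m.
Proof.
move=> m_gt0; have : ((sqm m)^*) ^+ 2 == (sqm m) ^+ 2.
  by rewrite -rmorphXn /sqm sqrtCK rmorphN /= conjC_nat.
rewrite eqf_sqr => /orP [/eqP sqm_real|/eqP //].
have : 0 <= `|sqm m| ^+ 2 by rewrite exprn_ge0.
by rewrite normCK sqm_real -expr2 /sqm sqrtCK oppr_ge0 lern0 (gtn_eqF m_gt0).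
Qed.

Lemma rat_sqr_mul_squarefree_int (m : nat) (c : rat) : squarefree m ->
  c * c * m%:R \in Num.int -> c \in Num.int.
Proof.
move=> sqf /intrP [z hz]; rewrite Qint_def.
have e : m%:Z * numq c * numq c = z * denq c * denq c.
  apply: (@intr_inj rat); rewrite !rmorphM /= !numqE -hz /=.
  rewrite -[(m%:Z)%:~R]/(m%:R : rat); ring.
have no_pdiv p : prime p -> ~~ (p %| `|denq c|)%N.
  move=> pp; apply/negP => pd.
  have : (p * p %| m * (`|numq c| * `|numq c|))%N.
    have: (`|(m%:Z * numq c * numq c)%R| = `|(z * denq c * denq c)%R|)%N by rewrite e.
    rewrite !abszM /= mulnA => ->; rewrite -mulnA; apply: dvdn_mull.
    exact: dvdn_mul.
  have pn : coprime p `|numq c|.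
    rewrite prime_coprime //; apply/negP => pn.
    have := coprime_num_den c; move/(coprime_dvdl pn)/(coprime_dvdr pd).
    by rewrite /coprime gcdnn => /eqP p1; rewrite p1 in pp.
  by rewrite Gauss_dvdl ?coprimeMl ?coprimeMr ?pn //; apply/negP; apply: sqf.
have den_pos : (0 < `|denq c|)%N by rewrite absz_gt0 gt_eqF ?denq_gt0.
have : `|denq c|%N = 1%N.
  apply/eqP; rewrite eqn_leq den_pos andbT leqNgt; apply/negP => den_gt1.
  by have := no_pdiv _ (pdiv_prime den_gt1); rewrite pdiv_dvd.
by move=> den1; rewrite -(gez0_abs (ltW (denq_gt0 c))) den1.
Qed.

Lemma inO_half_coord (m : nat) x : squarefree m -> (0 < m)%N -> inO m x ->
  exists A B : int, 2 * x = A%:~R + B%:~R * sqm m.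
Proof.
move=> sqf m_gt0 [[a [b ex]] Ax].
have xc : x^* = ratr a - ratr b * sqm m.
  by rewrite ex rmorphD [X in _ + X]rmorphM /= conj_sqm // !conj_Crat ?Crat_rat // mulrN.
have Axc : x^* \in Aint by rewrite Aint_aut.
have rat_int c : ratr c \in Aint -> c \in Num.int.
  by move=> Ac; rewrite -Cint_rat; apply: Cint_rat_Aint => //; exact: Crat_rat.
have /intrP [A hA] : 2 * a \in Num.int.
  apply: rat_int; have -> : ratr (2 * a) = x + x^* :> algC.
    by rewrite xc ex rmorphM /= rmorph_nat; ring.
  exact: rpredD.
have /intrP [B hB] : 2 * b \in Num.int.
  apply: rat_sqr_mul_squarefree_int sqf _; apply: rat_int.
  have -> : ratr (2 * b * (2 * b) * m%:R) = - (x - x^*) ^+ 2 :> algC.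
    rewrite xc ex !rmorphM /= !rmorph_nat.
    ring: (sqm_mul_self m).
  by rewrite rpredN rpredX // rpredB.
exists A, B.
have -> : (A%:~R : algC) = 2 * ratr a by rewrite -ratr_int -hA rmorphM /= rmorph_nat.
have -> : (B%:~R : algC) = 2 * ratr b by rewrite -ratr_int -hB rmorphM /= rmorph_nat.
by rewrite ex; ring.
Qed.

Section ModPrime.
Variable q : nat.
Hypothesis q_pr : prime q.

Lemma Fp_intr_eq0 (c : int) : ((c%:~R : 'F_q) == 0) = (q%:Z %| c)%Z.
Proof.
rewrite dvdzE; case: c => [n|n] /=; last rewrite NegzE mulrNz oppr_eq0.
  by rewrite -(inj_eq val_inj) /= val_Fp_nat.
by rewrite -(inj_eq val_inj) /= val_Fp_nat.
Qed.

Lemma int_inv_mod (c : int) : ~~ (q%:Z %| c)%Z ->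
  exists h t : int, h * c - 1 = t * q%:Z.
Proof.
rewrite -Fp_intr_eq0 => c_neq0; set h := (c%:~R : 'F_q)^-1.
have hE : ((val h)%:Z%:~R : 'F_q) = h by rewrite -pmulrn natr_Zp.
have : (q%:Z %| (val h)%:Z * c - 1)%Z.
  by rewrite -Fp_intr_eq0 rmorphB rmorphM /= rmorph1 hE mulVf // subrr.
by case/dvdzP=> t ht; exists (val h), t.
Qed.

Lemma intr_inv_mod (R : pzRingType) (c : int) : ~~ (q%:Z %| c)%Z ->
  exists h t : int, t%:~R * q%:R = h%:~R * c%:~R - 1 :> R.
Proof.
case/int_inv_mod=> h [t ht]; exists h, t.
by rewrite -[q%:R]/((q%:Z)%:~R) -intrM -ht rmorphB rmorphM.
Qed.

Lemma intr_inv2_mod (R : pzRingType) : (2 < q)%N ->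
  exists h t : int, t%:~R * q%:R = h%:~R * 2 - 1 :> R.
Proof. by move=> q_gt2; apply: (intr_inv_mod R (c := 2)); rewrite dvdzE gtnNdvd. Qed.

Lemma int_fermat (c : int) : ~~ (q%:Z %| c)%Z -> (q%:Z %| c ^+ q.-1 - 1)%Z.
Proof.
rewrite -!Fp_intr_eq0 rmorphB rmorphXn rmorph1 /= => c_neq0.
have := expf_card (c%:~R : 'F_q); rewrite card_Fp //.
case: q q_pr c_neq0 => // q' _ c_neq0.
by rewrite /= exprS -[X in _ = X]mulr1 => /(mulfI c_neq0) ->; rewrite subrr.
Qed.

Lemma dvdz_sqr_add_nonsquare (m : nat) (A B : int) :
  ~ (exists r : int, (q%:Z %| r * r + m%:Z)%Z) ->
  (q%:Z %| A * A + m%:Z * (B * B))%Z -> (q%:Z %| A)%Z /\ (q%:Z %| B)%Z.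
Proof.
move=> nonsq qN.
have qB : (q%:Z %| B)%Z.
  apply/negPn/negP => /int_inv_mod [h [t et]]; apply: nonsq; exists (A * h).
  have hB : (h%:~R : 'F_q) * B%:~R = 1.
    have : ((h * B - 1)%:~R : 'F_q) == 0 by rewrite Fp_intr_eq0 et dvdz_mull.
    by rewrite rmorphB rmorphM /= rmorph1 subr_eq0 => /eqP.
  move: qN; rewrite -!Fp_intr_eq0 !rmorphD !rmorphM /= => /eqP N0; apply/eqP.
  transitivity ((h%:~R * h%:~R) * (A%:~R * A%:~R + (m%:Z)%:~R * (B%:~R * B%:~R))
     + (m%:Z)%:~R * (1 - (h%:~R * B%:~R) * (h%:~R * B%:~R)) : 'F_q); first ring.
  by rewrite N0 hB mulr0 mul1r subrr mulr0 add0r.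
split=> //; have : (q%:Z %| A * A)%Z.
  have qmB : (q%:Z %| m%:Z * (B * B))%Z by rewrite !dvdz_mull.
  by rewrite -(rpredDr (A * A) qmB).
by rewrite !dvdzE abszM Euclid_dvdM // orbb.
Qed.

End ModPrime.

Lemma idealMul1 (I J : algC -> Prop) x y : I x -> J y -> idealMul I J (x * y).
Proof.
move=> Ix Jy; exists [:: (x, y)]; split; last by rewrite big_seq1.
by move=> p; rewrite inE => /eqP ->; split.
Qed.

Section PrimeIdeal.
Variables (m : nat) (P : algC -> Prop).
Hypothesis P_prime : prime_ideal m P.

Lemma pideal_inO x : P x -> inO m x.
Proof. by case: P_prime => h *; apply: h. Qed.

Lemma pideal0 : P 0.
Proof. by case: P_prime. Qed.

Lemma pidealD x y : P x -> P y -> P (x + y).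
Proof. by case: P_prime => _ _ h *; apply: h. Qed.

Lemma pidealMl a x : inO m a -> P x -> P (a * x).
Proof. by case: P_prime => _ _ _ h *; apply: h. Qed.

Lemma pidealMr a x : inO m a -> P x -> P (x * a).
Proof. by rewrite mulrC; apply: pidealMl. Qed.

Lemma pideal_neq1 : ~ P 1.
Proof. by case: P_prime => _ _ _ _ []. Qed.

Lemma pidealM_prime x y : inO m x -> inO m y -> P (x * y) -> P x \/ P y.
Proof. by case: P_prime => _ _ _ _ [_ h _]; apply: h. Qed.

Lemma pidealN x : P x -> P (- x).
Proof. by rewrite -mulN1r; apply: pidealMl; exact: (inO_int _ (-1)). Qed.

Lemma pidealB x y : P x -> P y -> P (x - y).
Proof. by move=> Px Py; apply: pidealD Px (pidealN Py). Qed.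

Lemma pideal_neq0 u : ~ P u -> u != 0.
Proof. by apply: contra_notN => /eqP ->; exact: pideal0. Qed.

Lemma pidealX_prime x n : inO m x -> P (x ^+ n) -> P x.
Proof.
move=> Ox; elim: n => [|n IH]; first by rewrite expr0 => /pideal_neq1.
by rewrite exprS => /(pidealM_prime Ox (inO_exp n Ox)) [|/IH].
Qed.

Lemma pidealX x n : (0 < n)%N -> P x -> P (x ^+ n).
Proof.
case: n => // n _ Px; rewrite exprSr.
exact: (pidealMl (inO_exp n (pideal_inO Px)) Px).
Qed.

Lemma congP0_quot a d : P a -> inO m d -> ~ P d -> congP m P (a / d) 0.
Proof. by move=> Pa Od nPd; exists a, d; rewrite subr0. Qed.

Lemma congP1_quot a d : P (a - d) -> inO m d -> ~ P d -> congP m P (a / d) 1.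
Proof.
move=> Pad Od nPd; exists (a - d), d; split=> //.
by rewrite mulrBl divff ?pideal_neq0.
Qed.

Lemma pidealM_notin x y : inO m x -> inO m y -> ~ P x -> ~ P y -> ~ P (x * y).
Proof. by move=> Ox Oy nPx nPy /(pidealM_prime Ox Oy) []. Qed.

Lemma pidealX_congr x y n : inO m x -> inO m y -> P (x - y) -> P (x ^+ n - y ^+ n).
Proof.
move=> Ox Oy Pxy; elim: n => [|n IH]; first by rewrite !expr0 subrr; exact: pideal0.
have -> : x ^+ n.+1 - y ^+ n.+1 = x * (x ^+ n - y ^+ n) + y ^+ n * (x - y).
  by rewrite !exprS; ring.
by apply: pidealD; apply: pidealMl => //; exact: inO_exp.
Qed.

Lemma idealPowMl f a x : inO m a -> idealPow m P f x -> idealPow m P f (a * x).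
Proof.
case: f => [|f] Oa /=; first by apply: inO_mul.
case=> s [hs ->]; exists (map (fun p => (p.1, a * p.2)) s); split.
  by move=> p /mapP [p' /hs [? ?] ->]; split=> //; exact: pidealMl.
by rewrite big_map mulr_sumr; apply: eq_bigr => p _ /=; ring.
Qed.

Lemma idealPowD f x y : idealPow m P f x -> idealPow m P f y -> idealPow m P f (x + y).
Proof.
case: f => [|f] /=; first by apply: inO_add.
case=> s1 [h1 ->] [s2 [h2 ->]]; exists (s1 ++ s2); split; last by rewrite big_cat.
by move=> p; rewrite mem_cat => /orP [] ?; [apply: h1 | apply: h2].
Qed.

Lemma idealPowB f x y : idealPow m P f x -> idealPow m P f y -> idealPow m P f (x - y).
Proof.
move=> Px Py; apply: idealPowD Px _; rewrite -mulN1r.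
by apply: idealPowMl Py; exact: (inO_int _ (-1)).
Qed.

Lemma idealPowS f x p : idealPow m P f x -> P p -> idealPow m P f.+1 (x * p).
Proof. exact: idealMul1. Qed.

Lemma idealPow_exp f x : P x -> idealPow m P f (x ^+ f).
Proof.
move=> Px; elim: f => [|f IH]; first by rewrite expr0; exact: (inO_nat _ 1).
by rewrite exprSr; apply: idealPowS.
Qed.

End PrimeIdeal.

Lemma idealMul_sub (m : nat) (I J : algC -> Prop) z :
  prime_ideal m I -> prime_ideal m J -> idealMul I J z -> I z /\ J z.
Proof.
move=> pI pJ [s [hs ->]]; elim: s hs => [|p s IH] hs.
  by rewrite big_nil; split; [exact: pideal0 pI | exact: pideal0 pJ].
have [Ip1 Jp2] := hs p (mem_head _ _).
have [Is Js] : I (\sum_(p0 <- s) p0.1 * p0.2) /\ J (\sum_(p0 <- s) p0.1 * p0.2).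
  by apply: IH => p0 hp0; apply: hs; rewrite in_cons hp0 orbT.
rewrite big_cons; split.
  by apply: (pidealD pI _ Is); exact: (pidealMr pI (pideal_inO pJ Jp2) Ip1).
by apply: (pidealD pJ _ Js); exact: (pidealMl pJ (pideal_inO pI Ip1) Jp2).
Qed.

Section ResidueField.
Variables (m q : nat) (P : algC -> Prop).
Hypotheses (q_pr : prime q) (P_prime : prime_ideal m P) (Pq : P q%:R).
Local Notation s := (sqm m).

Lemma pideal_int (c : int) : P c%:~R <-> (q%:Z %| c)%Z.
Proof.
split=> [Pc|/dvdzP [t ->]]; last first.
  by rewrite intrM -[X in P (_ * X)]/(q%:R); apply: (pidealMl P_prime) => //; exact: inO_int.
apply/negPn/negP => /(intr_inv_mod q_pr algC) [h [t tq]]; apply: (pideal_neq1 P_prime).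
have -> : 1 = h%:~R * c%:~R - t%:~R * q%:R :> algC by rewrite tq; ring.
by apply: (pidealB P_prime); apply: (pidealMl P_prime) => //; exact: inO_int.
Qed.

Definition int_residues := forall x, inO m x -> exists c : int, P (x - c%:~R).

Lemma pideal_sqm_residue (r : int) : (q%:Z %| r * r + m%:Z)%Z ->
  exists rho : int, P (s - rho%:~R).
Proof.
move=> qr.
have Os1 : inO m (s - r%:~R) by apply: inO_sub; [exact: inO_sqm | exact: inO_int].
have Os2 : inO m (s + r%:~R) by apply: inO_add; [exact: inO_sqm | exact: inO_int].
have : P ((s - r%:~R) * (s + r%:~R)).
  have -> : (s - r%:~R) * (s + r%:~R) = - (r * r + m%:Z)%:~R.
    rewrite rmorphD rmorphM /= -[(m%:Z)%:~R]/(m%:R : algC).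
    ring: (sqm_mul_self m).
  by apply: (pidealN P_prime); apply/pideal_int.
case/(pidealM_prime P_prime Os1 Os2) => Pr; first by exists r.
by exists (- r); rewrite rmorphN opprK.
Qed.

Lemma int_residues_of_sqrt (r : int) : (2 < q)%N -> squarefree m -> (0 < m)%N ->
  (q%:Z %| r * r + m%:Z)%Z -> int_residues.
Proof.
move=> q_gt2 sqf m_gt0 /pideal_sqm_residue [rho Prho] x Ox.
have [A [B xE]] := inO_half_coord sqf m_gt0 Ox.
have [h [t tq]] := intr_inv2_mod q_pr algC q_gt2.
exists (h * (A + B * rho)).
have -> : x - (h * (A + B * rho))%:~R =
    (h * B)%:~R * (s - rho%:~R) - (t%:~R * x) * q%:R.
  by rewrite mulrAC tq mulrBl -mulrA xE !(rmorphD, rmorphM) /=; ring.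
apply: (pidealB P_prime); first by apply: (pidealMl P_prime) => //; exact: inO_int.
by apply: (pidealMl P_prime) => //; apply: inO_mul => //; exact: inO_int.
Qed.

Lemma pideal_principal_of_nonsquare : (2 < q)%N -> squarefree m -> (0 < m)%N ->
  ~ (exists r : int, (q%:Z %| r * r + m%:Z)%Z) -> forall b, P b -> principal m q%:R b.
Proof.
move=> q_gt2 sqf m_gt0 nonsq b Pb.
have [A [B bE]] := inO_half_coord sqf m_gt0 (pideal_inO P_prime Pb).
have /pideal_int PN : P (A * A + m%:Z * (B * B))%:~R.
  have -> : (A * A + m%:Z * (B * B))%:~R = 2 * b * (A%:~R - B%:~R * s).
    rewrite bE !(rmorphD, rmorphM) /= -[(m%:Z)%:~R]/(m%:R : algC).
    ring: (sqm_mul_self m).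
  apply: (pidealMr P_prime); first by rewrite -mulNr -rmorphN; exact: inO_lin.
  exact: (pidealMl P_prime (inO_nat m 2) Pb).
have [/dvdzP [A' AE] /dvdzP [B' BE]] := dvdz_sqr_add_nonsquare q_pr nonsq PN.
have [h [t tq]] := intr_inv2_mod q_pr algC q_gt2.
exists (h%:~R * (A'%:~R + B'%:~R * s) - t%:~R * b); split.
  by apply: inO_sub; apply: inO_mul;
    [exact: inO_int | exact: inO_lin | exact: inO_int | exact: (pideal_inO P_prime Pb)].
transitivity (h%:~R * (2 * b) - (h%:~R * 2 - 1) * b); first ring.
by rewrite -tq bE AE BE !rmorphM /=; ring.
Qed.

Section IntResidues.
Hypothesis res : int_residues.

Lemma int_residue_ndvd x c : ~ P x -> P (x - c%:~R) -> ~~ (q%:Z %| c)%Z.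
Proof.
move=> nPx Pxc; apply/negP => /pideal_int Pc; apply: nPx.
by have := pidealD P_prime Pxc Pc; rewrite subrK.
Qed.

Lemma pideal_fermat x : inO m x -> ~ P x -> P (x ^+ q.-1 - 1).
Proof.
move=> Ox nPx; have [c Pxc] := res Ox.
have /pideal_int := int_fermat q_pr (int_residue_ndvd nPx Pxc).
rewrite rmorphB rmorphXn rmorph1 /= => Pc.
have := pidealD P_prime (pidealX_congr P_prime q.-1 Ox (inO_int m c) Pxc) Pc.
by rewrite addrA subrK.
Qed.

Lemma pideal_inv_mod y : inO m y -> ~ P y -> exists y', inO m y' /\ P (y * y' - 1).
Proof.
move=> Oy nPy; have [c Pyc] := res Oy.
have [h [t tq]] := intr_inv_mod q_pr algC (int_residue_ndvd nPy Pyc).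
exists h%:~R; split; first exact: inO_int.
have -> : y * h%:~R - 1 = h%:~R * (y - c%:~R) + t%:~R * q%:R by rewrite tq; ring.
by apply: (pidealD P_prime); apply: (pidealMl P_prime) => //; exact: inO_int.
Qed.

Lemma pideal_maximal (Q : algC -> Prop) : prime_ideal m Q ->
  (forall x, P x -> Q x) -> forall x, Q x -> P x.
Proof.
move=> Q_prime PQ x Qx; apply: NNPP => nPx.
have [c Pxc] := res (pideal_inO Q_prime Qx).
have Qc : Q c%:~R by have := pidealB Q_prime Qx (PQ _ Pxc); rewrite opprB addrC subrK.
have [h [t tq]] := intr_inv_mod q_pr algC (int_residue_ndvd nPx Pxc).
apply: (pideal_neq1 Q_prime).
have -> : 1 = h%:~R * c%:~R - t%:~R * q%:R :> algC by rewrite tq; ring.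
apply: (pidealB Q_prime); first exact: (pidealMl Q_prime (inO_int m h) Qc).
exact: (pidealMl Q_prime (inO_int m t) (PQ _ Pq)).
Qed.

Lemma pideal_congrX_fermat l j W al u e : (q.-1 = l * j)%N ->
  inO m W -> inO m al -> inO m u -> inO m e -> ~ P u -> ~ P e ->
  P (W * u ^+ l - al * e ^+ l) -> P (W ^+ j - al ^+ j).
Proof.
move=> qE OW Oal Ou Oe nPu nPe Pcongr.
have -> : W ^+ j - al ^+ j = ((W * u ^+ l) ^+ j - (al * e ^+ l) ^+ j)
    - W ^+ j * (u ^+ q.-1 - 1) + al ^+ j * (e ^+ q.-1 - 1).
  by rewrite qE !exprMn -!exprM; ring.
have OlX x : inO m x -> inO m (x ^+ l) by apply: inO_exp.
apply: (pidealD P_prime); last by apply: (pidealMl P_prime (inO_exp j Oal)); exact: pideal_fermat.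
apply: (pidealB P_prime); first exact: (pidealX_congr P_prime j (inO_mul OW (OlX _ Ou))
  (inO_mul Oal (OlX _ Oe)) Pcongr).
by apply: (pidealMl P_prime (inO_exp j OW)); exact: pideal_fermat.
Qed.

End IntResidues.

End ResidueField.

Section Localization.
Variables (m q : nat) (P : algC -> Prop) (y : algC).
Hypotheses (q_pr : prime q) (P_prime : prime_ideal m P) (Pq : P q%:R).
Hypotheses (res : int_residues m P) (Oy : inO m y) (nPy : ~ P y).
Hypothesis Py_qO : forall p, P p -> principal m q%:R (p * y).

Let q_neq0 : q%:R != 0 :> algC.
Proof. by rewrite pnatr_eq0 -lt0n prime_gt0. Qed.

Let y_neq0 : y != 0.
Proof. exact: (pideal_neq0 P_prime nPy). Qed.

Lemma idealPow_mul_expy f x : idealPow m P f x -> principal m (q%:R ^+ f) (x * y ^+ f).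
Proof.
elim: f x => [|f IH] x /=; first by move=> Ox; exists x; rewrite !expr0 mulr1 mul1r.
case=> s [hs ->]; elim: s hs => [|p s IHs] hs.
  by exists 0; split; [exact: (inO_nat _ 0) | rewrite big_nil mul0r mulr0].
have [/IH [o1 [Oo1 e1]] /Py_qO [o2 [Oo2 e2]]] := hs p (mem_head _ _).
have [o3 [Oo3 e3]] : principal m (q%:R ^+ f.+1) ((\sum_(p0 <- s) p0.1 * p0.2) * y ^+ f.+1).
  by apply: IHs => p0 hp0; apply: hs; rewrite in_cons hp0 orbT.
exists (o1 * o2 + o3); split; first by apply: inO_add => //; apply: inO_mul.
rewrite big_cons mulrDl e3 exprS.
have -> : p.1 * p.2 * (y * y ^+ f) = (p.1 * y ^+ f) * (p.2 * y) by ring.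
by rewrite e1 e2 exprS; ring.
Qed.

Lemma ordO_unit a f : ordO m P a f ->
  exists a', [/\ inO m a', ~ P a' & a * y ^+ f = q%:R ^+ f * a'].
Proof.
case=> Pfa nPf1a; have [a' [Oa' aE]] := idealPow_mul_expy Pfa.
exists a'; split=> // Pa'; apply: nPf1a.
have [y' [Oy' Pyy']] := pideal_inv_mod q_pr P_prime Pq res Oy nPy.
have := pidealX_congr P_prime f (inO_mul Oy Oy') (inO_nat m 1) Pyy'.
rewrite expr1n => Pyyf.
have -> : a = q%:R ^+ f * (a' * y' ^+ f) - a * ((y * y') ^+ f - 1).
  by rewrite mulrA -aE exprMn; ring.
apply: idealPowB => //; last exact: (idealPowS Pfa Pyyf).
apply: idealPowS; first exact: idealPow_exp.
exact: (pidealMr P_prime (inO_exp f Oy') Pa').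
Qed.

Lemma ordK0_unit_quot eps : ordK m P eps 0 ->
  exists al be, [/\ inO m al, inO m be, ~ P al, ~ P be & eps = al / be].
Proof.
case=> a [d [[Oa Od _ /eqP d_neq0 ->] [f [g [oa od fg]]]]].
have {}fg : f = g by move/eqP: fg; rewrite eq_sym subr_eq0 => /eqP [].
subst g.
have [a' [Oa' nPa' aE]] := ordO_unit oa.
have [d' [Od' nPd' dE]] := ordO_unit od.
exists a', d'; split=> //.
have d'_neq0 := pideal_neq0 P_prime nPd'.
apply/eqP; rewrite eqr_div //; apply/eqP.
apply: (mulIf (expf_neq0 f y_neq0)); apply: (mulIf (expf_neq0 f q_neq0)).
transitivity ((a * y ^+ f) * d' * q%:R ^+ f); first ring.
transitivity (a' * (d * y ^+ f) * q%:R ^+ f); last ring.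
by rewrite aE dE; ring.
Qed.

Section RootIntegrality.
Variables (l : nat) (a eta : algC).
Hypotheses (l_gt0 : (0 < l)%N) (Oa : inO m a) (nPa : ~ P a).
Hypothesis Oaeta : inO m (a * eta ^+ l).

Lemma root_quot_descent j g u : inO m g -> inO m u -> ~ P u -> eta = g / (q%:R ^+ j * u) ->
  exists e w, [/\ inO m e, inO m w, ~ P w & eta = e / w].
Proof.
elim: j g u => [|j IH] g u Og Ou nPu etaE.
  by exists g, u; rewrite etaE expr0 mul1r.
set w := q%:R ^+ j.+1 * u.
have u_neq0 := pideal_neq0 P_prime nPu.
have w_neq0 : w != 0 by rewrite mulf_neq0 ?expf_neq0.
have Pw : P w.
  rewrite /w exprS -mulrA; apply: (pidealMr P_prime) Pq.
  by apply: inO_mul => //; apply: inO_exp; exact: inO_nat.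
have Pg : P g.
  have : P (a * g ^+ l).
    have -> : a * g ^+ l = (a * eta ^+ l) * w ^+ l.
      by rewrite etaE expr_div_n mulrA divfK // expf_neq0.
    exact: (pidealMl P_prime Oaeta (pidealX P_prime l_gt0 Pw)).
  by case/(pidealM_prime P_prime Oa (inO_exp l Og)) => // /(pidealX_prime P_prime Og).
have [o [Oo gyE]] := Py_qO Pg.
apply: (IH o (u * y)) => //; first exact: inO_mul.
  exact: (pidealM_notin P_prime Ou Oy nPu nPy).
rewrite etaE -(mulfK y_neq0 g) gyE /w exprS; field.
by rewrite q_neq0 y_neq0 u_neq0 expf_neq0.
Qed.

Lemma inK_root_quot_unit : inK m eta ->
  exists e w, [/\ inO m e, inO m w, ~ P w & eta = e / w].
Proof.
case/inK_int_coord => D [A [B [D_gt0 etaE]]].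
have [D1 qD1 DE] := pfactor_coprime q_pr D_gt0.
have nPD1 : ~ P D1%:R.
  move=> /(pideal_int q_pr P_prime Pq (D1%:Z)); rewrite dvdzE /=.
  by apply/negP; rewrite -prime_coprime.
set j := logn q D in DE.
apply: (root_quot_descent (j := j) (inO_lin m A B) (inO_nat m D1) nPD1).
rewrite -etaE DE natrM natrX; field.
by rewrite (pideal_neq0 P_prime nPD1) expf_neq0.
Qed.

End RootIntegrality.

Lemma congP_quot_pow_of_congr k l eps eta X c : (0 < k)%N -> (0 < l)%N ->
  q = (2 * k * l).+1 -> ordK m P eps 0 -> inK m eta -> inO m X -> inO m c ->
  X = eps * eta ^+ l + c * q%:R ->
  congP m P ((X / eps) ^+ (2 * k)) 0 \/ congP m P ((X / eps) ^+ (2 * k)) 1.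
Proof.
move=> k_gt0 l_gt0 qE epsP etaK OX Oc XE.
have [al [be [Oal Obe nPal nPbe epsE]]] := ordK0_unit_quot epsP.
have al_neq0 := pideal_neq0 P_prime nPal.
have be_neq0 := pideal_neq0 P_prime nPbe.
have aletaE : al * eta ^+ l = (X - c * q%:R) * be by rewrite XE epsE; field.
have Oaleta : inO m (al * eta ^+ l).
  rewrite aletaE; apply: inO_mul => //.
  by apply: inO_sub => //; apply: inO_mul => //; exact: inO_nat.
have [e [u [Oe Ou nPu etaE]]] := inK_root_quot_unit l_gt0 Oal nPal Oaleta etaK.
set W := X * be; have OW : inO m W by apply: inO_mul.
have -> : (X / eps) ^+ (2 * k) = W ^+ (2 * k) / al ^+ (2 * k).
  by rewrite epsE -expr_div_n invf_div mulrA.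
have nPal2k : ~ P (al ^+ (2 * k)) by move/(pidealX_prime P_prime Oal).
have Oal2k := inO_exp (2 * k) Oal.
have [PW|nPW] := classic (P W).
  left; apply: congP0_quot => //.
  by apply: (pidealX P_prime _ PW); rewrite muln_gt0 k_gt0.
right; apply: (congP1_quot P_prime) => //.
have PWu : P (W * u ^+ l - al * e ^+ l).
  have -> : W * u ^+ l - al * e ^+ l = (c * be * u ^+ l) * q%:R.
    have eE : e = eta * u by rewrite etaE divfK ?(pideal_neq0 P_prime nPu).
    by rewrite eE exprMn mulrA aletaE /W; ring.
  apply: (pidealMl P_prime) Pq; apply: inO_mul; [exact: inO_mul | exact: inO_exp].
have nPe : ~ P e.
  move=> Pe; apply: (pidealM_notin P_prime OW (inO_exp l Ou) nPW).
    by move/(pidealX_prime P_prime Ou).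
  rewrite -(subrK (al * e ^+ l) (W * u ^+ l)); apply: (pidealD P_prime PWu).
  exact: (pidealMl P_prime Oal (pidealX P_prime l_gt0 Pe)).
apply: (pideal_congrX_fermat q_pr P_prime Pq res _ OW Oal Ou Oe nPu nPe PWu).
by rewrite qE /= mulnC.
Qed.

Lemma condC_pideal n v k l eps eta (sigma : int) (z : nat) : (0 < k)%N -> (0 < l)%N ->
  q = (2 * k * l).+1 -> ordK m P eps 0 -> inK m eta ->
  v%:R * sigma%:~R ^+ l + n%:R * sqm m = eps * eta ^+ l ->
  (q%:Z %| z%:Z - sigma ^+ l)%Z -> condC m n v k eps P z.
Proof.
move=> k_gt0 l_gt0 qE epsP etaK eqn /dvdzP [t zE].
apply: (congP_quot_pow_of_congr (c := (v%:Z * t)%:~R) k_gt0 l_gt0 qE epsP etaK).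
- by apply: inO_add; apply: inO_mul;
    [exact: inO_nat | exact: inO_nat | exact: inO_nat | exact: inO_sqm].
- exact: inO_int.
have zE' : (z%:R : algC) = sigma%:~R ^+ l + t%:~R * q%:R.
  by rewrite -[z%:R]/(z%:Z%:~R) -(subrK (sigma ^+ l) z%:Z) zE rmorphD rmorphM rmorphXn addrC.
by rewrite -eqn zE' rmorphM /=; ring.
Qed.

End Localization.

Lemma dvdz_Fp_val (q : nat) (c : int) : prime q ->
  (q%:Z %| (val (c%:~R : 'F_q))%:Z - c)%Z.
Proof.
move=> q_pr; rewrite -Fp_intr_eq0 // rmorphB /= -[(_%:Z)%:~R]pmulrn natr_Zp.
by rewrite subrr.
Qed.

Lemma idealMul_principal_l (m : nat) (I J : algC -> Prop) c z :
  prime_ideal m J -> (forall b, I b -> principal m c b) ->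
  idealMul I J z -> exists w, J w /\ z = c * w.
Proof.
move=> J_prime Ic [s [hs ->]]; elim: s hs => [|p s IH] hs.
  by exists 0; rewrite big_nil mulr0; split=> //; exact: (pideal0 J_prime).
have [/Ic [o [Oo oE]] Jp2] := hs p (mem_head _ _).
have [w [Jw wE]] : exists w, J w /\ \sum_(p0 <- s) p0.1 * p0.2 = c * w.
  by apply: IH => p0 hp0; apply: hs; rewrite in_cons hp0 orbT.
exists (o * p.2 + w); split.
  by apply: (pidealD J_prime) => //; exact: (pidealMl J_prime Oo Jp2).
by rewrite big_cons wE oE; ring.
Qed.

Lemma split_prime_sqrt_neg (m q : nat) (q1 q2 : algC -> Prop) :
  prime q -> (2 < q)%N -> squarefree m -> (0 < m)%N ->
  prime_ideal m q1 -> prime_ideal m q2 -> q1 q%:R -> idealMul q1 q2 q%:R ->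
  exists r : int, (q%:Z %| r * r + m%:Z)%Z.
Proof.
move=> q_pr q_gt2 sqf m_gt0 q1_prime q2_prime q1q q_q1q2; apply: NNPP => nonsq.
have q1_qO := pideal_principal_of_nonsquare q_pr q1_prime q1q q_gt2 sqf m_gt0 nonsq.
have [w [q2w qE]] := idealMul_principal_l q2_prime q1_qO q_q1q2.
apply: (pideal_neq1 q2_prime); suff -> : 1 = w by [].
have q_neq0 : q%:R != 0 :> algC by rewrite pnatr_eq0 -lt0n prime_gt0.
by apply: (mulfI q_neq0); rewrite -qE mulr1.
Qed.

Lemma pideal_exists_notin (m q : nat) (P Q : algC -> Prop) :
  prime q -> prime_ideal m P -> prime_ideal m Q -> P q%:R -> int_residues m P ->
  P <> Q -> exists y, P y /\ ~ Q y.
Proof.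
move=> q_pr P_prime Q_prime Pq res PQ; apply: NNPP => noy.
have PsubQ x : P x -> Q x by move=> Px; apply: NNPP => nQx; apply: noy; exists x.
apply: PQ; apply: functional_extensionality => x; apply: propositional_extensionality.
by split; [exact: PsubQ | exact: (pideal_maximal q_pr P_prime Pq res Q_prime PsubQ)].
Qed.

Theorem lemma9p2 (l R S T v m n q k : nat) (eps : algC) (q1 q2 : algC -> Prop) :
  prime l ->
  (0 < R)%N -> (0 < S)%N -> (0 < T)%N ->
  coprime R S -> coprime S T -> coprime R T ->
  (0 < v)%N -> (S * Sprime S = v ^ 2)%N ->
  squarefree m -> (0 < m)%N -> (0 < n)%N -> (T * Sprime S = m * n ^ 2)%N ->
  in_E l m n (R * Sprime S) eps ->
  (0 < k)%N -> q = (2 * k * l).+1 -> prime q ->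
  prime_ideal m q1 -> prime_ideal m q2 -> q1 <> q2 ->
  (forall x, principal m q%:R x <-> idealMul q1 q2 x) ->
  ordK m q1 eps 0 -> ordK m q2 eps 0 ->
  (forall zeta : 'F_q, (exists eta : 'F_q, zeta = eta ^+ l) ->
     ~ (condC m n v k eps q1 zeta /\ condC m n v k eps q2 zeta)) ->
  ~ exists (sigma : int) (eta : algC),
      inK m eta /\
      v%:R * (sigma%:~R) ^+ l + n%:R * sqm m = eps * eta ^+ l.
Proof.
move=> l_pr _ _ _ _ _ _ _ _ sqf m_gt0 _ _ _ k_gt0 qE q_pr q1_prime q2_prime q12 qO_split
  eps1 eps2 noC [sigma [eta [etaK eqn]]].
have l_gt0 := prime_gt0 l_pr.
have q_gt2 : (2 < q)%N by rewrite qE; nia.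
have q_q1q2 : idealMul q1 q2 q%:R.
  by apply/qO_split; exists 1; split; [exact: (inO_nat m 1) | rewrite mulr1].
have [q1q q2q] := idealMul_sub q1_prime q2_prime q_q1q2.
have [r qr] := split_prime_sqrt_neg q_pr q_gt2 sqf m_gt0 q1_prime q2_prime q1q q_q1q2.
have res1 := int_residues_of_sqrt q_pr q1_prime q1q q_gt2 sqf m_gt0 qr.
have res2 := int_residues_of_sqrt q_pr q2_prime q2q q_gt2 sqf m_gt0 qr.
have [y1 [q1y1 nq2y1]] := pideal_exists_notin q_pr q1_prime q2_prime q1q res1 q12.
have [y2 [q2y2 nq1y2]] := pideal_exists_notin q_pr q2_prime q1_prime q2q res2 (nesym q12).
have q1y2_qO p : q1 p -> principal m q%:R (p * y2).
  by move=> q1p; apply/qO_split/idealMul1.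
have q2y1_qO p : q2 p -> principal m q%:R (p * y1).
  by move=> q2p; rewrite mulrC; apply/qO_split/idealMul1.
have zetaE := dvdz_Fp_val (sigma ^+ l) q_pr.
apply: (noC (sigma ^+ l)%:~R); first by exists sigma%:~R; rewrite rmorphXn.
split.
  exact: (condC_pideal q_pr q1_prime q1q res1 (pideal_inO q2_prime q2y2) nq1y2 q1y2_qO
    k_gt0 l_gt0 qE eps1 etaK eqn zetaE).
exact: (condC_pideal q_pr q2_prime q2q res2 (pideal_inO q1_prime q1y1) nq2y1 q2y1_qO
  k_gt0 l_gt0 qE eps2 etaK eqn zetaE).
Qed.
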